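(* Let $M$ be an $n$-dimensional manifold and let $\alpha\in\mathcal{A}(M)$ be extendible. Then there exists a unique open set $V\subset\mathbb{R}^n$ such that $(\alpha,V)\in\mathrm{EX}(M)$ and such that $U\subset V$ for every $U$ with $(\alpha,U)\in\mathrm{EX}(M)$.
   Context: Conventions: $M$ is an $n$-dimensional smooth manifold (Hausdorff, second countable) with maximal $C^\infty$ atlas $\mathcal{A}(M)$; every chart $\alpha\in\mathcal{A}(M)$ has open domain $\mathrm{dom}(\alpha)\subset M$ and open range $\mathrm{ran}(\alpha)\subset\mathbb{R}^n$. For $A\subset\mathbb{R}^n$, $\partial A$ is its topological boundary in $\mathbb{R}^n$; for $A\subset U\subset\mathbb{R}^n$, $\partial_U A$ is the topological boundary of $A$ relative to $U$ (for $A,U$ open, $\partial_U A=U\cap\partial A$). An admissible boundary point of $\alpha\in\mathcal{A}(M)$ is a point $p\in\partial\,\mathrm{ran}(\alpha)$ such that every sequence $(x_i)\subset\mathrm{dom}(\alpha)$ with $\alpha(x_i)\to p$ has no accumulation point in $M$; $B(\alpha)$ denotes the set of admissible boundary points of $\alpha$. An extension is a pair $(\alpha,U)$ with $\alpha\in\mathcal{A}(M)$, $U\subset\mathbb{R}^n$ open, $\mathrm{ran}(\alpha)\subset U$ and $\emptyset\neq\partial_U\mathrm{ran}(\alpha)\subset B(\alpha)$; $\mathrm{EX}(M)$ is the set of all extensions, and $\alpha$ is called extendible if $(\alpha,U)\in\mathrm{EX}(M)$ for some $U$. *)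

From HB Require Import structures.
From mathcomp Require Import all_boot all_order all_algebra.
From mathcomp Require Import all_classical all_reals all_analysis.
Set Implicit Arguments. Unset Strict Implicit. Unset Printing Implicit Defensive.
Import Order.TTheory GRing.Theory Num.Theory.
Import numFieldNormedType.Exports.
Local Open Scope classical_set_scope.
Local Open Scope ring_scope.

Section Manifolds.
Variables (R : realType) (n : nat).
Notation E := 'rV[R]_n.

Fixpoint iter_dir (vs : seq E) (f : E -> E) : E -> E :=
  match vs with
  | [::] => f
  | v :: vs' => fun x => 'D_v (iter_dir vs' f) x
  end.

Definition smooth_on (U : set E) (f : E -> E) : Prop :=
  forall vs : seq E,
    {within U, continuous (iter_dir vs f)} /\
    (forall x v, U x -> derivable (iter_dir vs f) x v).

Variable M : topologicalType.

Record chart := Chart {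
  cdom : set M;
  cmap : M -> E;
  cinv : E -> M;
  cdom_open : open cdom;
  cran_open : open (cmap @` cdom);
  cmapK : forall x, cdom x -> cinv (cmap x) = x;
  cmap_cont : {within cdom, continuous cmap};
  cinv_cont : {within cmap @` cdom, continuous cinv} }.

Definition cran (a : chart) : set E := cmap a @` cdom a.

Definition compatible (a b : chart) : Prop :=
  smooth_on (cmap b @` (cdom a `&` cdom b)) (cmap a \o cinv b) /\
  smooth_on (cmap a @` (cdom a `&` cdom b)) (cmap b \o cinv a).

Record smooth_manifold := SmoothManifold {
  atlas : set chart;
  mf_hausdorff : hausdorff_space M;
  mf_second_countable : @second_countable M;
  atlas_cover : forall p : M, exists2 a, atlas a & cdom a p;
  atlas_compat : forall a b, atlas a -> atlas b -> compatible a b;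
  atlas_maximal : forall c, (forall a, atlas a -> compatible c a) -> atlas c }.

Definition bdry (A : set E) : set E := closure A `\` interior A.

Definition rel_bdry (U A : set E) : set E := U `&` bdry A.

Definition admissible_bdry (a : chart) : set E :=
  [set p | bdry (cran a) p /\
     forall x : nat -> M, (forall i, cdom a (x i)) ->
       (cmap a \o x) @ \oo --> p ->
       forall q : M, ~ cluster (x @ \oo) q].

Definition EX (S : smooth_manifold) (a : chart) (U : set E) : Prop :=
  atlas S a /\ open U /\ cran a `<=` U /\
  rel_bdry U (cran a) !=set0 /\ rel_bdry U (cran a) `<=` admissible_bdry a.

Definition extendible (S : smooth_manifold) (a : chart) : Prop :=
  exists U, EX S a U.

End Manifolds.

From HB Require Import structures.
From mathcomp Require Import all_boot all_order all_algebra.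
From mathcomp Require Import all_classical all_reals all_analysis.
Import numFieldNormedType.Exports.
Local Open Scope classical_set_scope.
Local Open Scope ring_scope.

(* The extension domains of a chart are closed under nonempty unions, because
   the relative boundary distributes over unions of the ambient open set.  The
   union of all of them is therefore an extension domain containing every
   other one, and a greatest element is unique. *)

Section MaximalExtension.
Variables (R : realType) (n : nat) (M : topologicalType).
Variables (S : smooth_manifold R n M) (a : chart R n M).

Lemma rel_bdry_bigcup (I : Type) (D : set I) (U : I -> set 'rV[R]_n)
    (A : set 'rV[R]_n) :
  rel_bdry (\bigcup_(i in D) U i) A = \bigcup_(i in D) rel_bdry (U i) A.
Proof. exact: setI_bigcupl. Qed.

Lemma EX_bigcup (I : Type) (D : set I) (U : I -> set 'rV[R]_n) :
  D !=set0 -> (forall i, D i -> EX S a (U i)) ->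
  EX S a (\bigcup_(i in D) U i).
Proof.
move=> [i0 Di0] EXU.
have [atlas_a [_ [ran_sub [bdry_ne _]]]] := EXU i0 Di0.
split=> //; split; first by apply: bigcup_open => i /EXU [_ []].
split; first by move=> x /ran_sub Ux; exists i0.
rewrite rel_bdry_bigcup; split.
  by case: bdry_ne => p Bp; exists p, i0.
by move=> p [i Di]; have [_ [_ [_ [_]]]] := EXU i Di; apply.
Qed.

Definition maximal_extension : set 'rV[R]_n := \bigcup_(U in EX S a) U.

Lemma sub_maximal_extension U : EX S a U -> U `<=` maximal_extension.
Proof. by move=> EXU x Ux; exists U. Qed.

Lemma EX_maximal_extension : extendible S a -> EX S a maximal_extension.
Proof. by move=> EXa; apply: EX_bigcup. Qed.

End MaximalExtension.

Arguments maximal_extension {R n M}.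

Theorem mainTheorem1 (R : realType) (n : nat) (M : topologicalType)
  (S : smooth_manifold R n M) (a : chart R n M) :
  atlas S a -> extendible S a ->
  exists! V : set 'rV[R]_n,
    open V /\ EX S a V /\ (forall U : set 'rV[R]_n, EX S a U -> U `<=` V).
Proof.
move=> _ /EX_maximal_extension EXV.
exists (maximal_extension S a); split.
  by split; [case: EXV => _ [] | split=> //; exact: sub_maximal_extension].
move=> V [_ [EXV' maxV]].
apply/seteqP; split; first exact: maxV.
exact: sub_maximal_extension.
Qed.
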